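(* Let $\chi$ be a universal constant with the following property: for every SBM on $[n]$ with communities $S_1,\dots,S_k$ and edge probabilities $a/n>b/n$, with $L_{ij}=1$ for $i,j$ in the same community and $L_{ij}=-1$ otherwise, with probability at least $1-2/n^2$ there is $S\subseteq[n]$ with $|S|\ge(1-e^{-2C})n$ and $\|(A-\frac{a+b}{2n}J-\frac{a-b}{2n}L)_{S\times S}\|_{\mathrm{op}}\le\chi\sqrt{a+b}$. Now let $A$ be the adjacency matrix of an $\varepsilon$-corrupted semi-random SBM with edge parameters $b<a$ and communities $S_1,\dots,S_k$ partitioning $[n]$, and let $C=(\sqrt a-\sqrt b)^2$. Then with probability at least $1-2/n^2$, every optimal solution $W$ of the Initialization SDP (with inputs $A,a,b,\chi$) satisfies: (1) $\sum W_{ij}$ over pairs $(i,j)$ with $i,j$ in different communities is at most $(5\chi/\sqrt C+2\varepsilon)n^2$; (2) $\sum W_{ij}$ over pairs $(i,j)$ with $i,j$ in the same community is at least $\sum_{i=1}^k|S_i|^2-(6\chi/\sqrt C+4\varepsilon)n^2$.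
   Context: $\varepsilon$-corrupted semi-random SBM: there is an unknown partition of $[n]$ into communities $S_1,\dots,S_k$. A graph $A_0$ is sampled with all pairs independent, same-community pairs joined with probability $a/n$ and different-community pairs with probability $b/n$ (symmetric adjacency matrix, zero diagonal). An adversary then (i) arbitrarily adds edges within communities and removes edges between communities, and (ii) picks up to $\varepsilon n$ vertices and arbitrarily modifies their incident edges; $A$ is the resulting adjacency matrix. Initialization SDP: given $A,a,b,\chi$, find $n\times n$ real matrices $W,F$ with $0\le W_{ij},F_{ij}\le1$ for all $i,j$, $\|W\|_1\le n$ (trace norm, i.e. sum of singular values), and $-\chi\sqrt{a+b}\,I\preceq(A-(a/n)J-F)\odot W\preceq\chi\sqrt{a+b}\,I$ (where $X\preceq Y$ means $Y-X$ is symmetric positive semidefinite), maximizing $\sum_{i,j}W_{ij}$. $J$ is the all-ones matrix and $\odot$ the entrywise product. *)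

From HB Require Import structures.
From mathcomp Require Import all_boot all_order all_algebra.
From mathcomp Require Import boolp reals sequences.
Set Implicit Arguments. Unset Strict Implicit. Unset Printing Implicit Defensive.
Import Order.TTheory GRing.Theory Num.Theory.
Local Open Scope ring_scope.

Definition hadamard {R : realType} {n : nat} (X Y : 'M[R]_n) : 'M[R]_n :=
  \matrix_(i, j) (X i j * Y i j).

Definition psd {R : realType} {n : nat} (X : 'M[R]_n) : Prop :=
  X^T = X /\ forall x : 'cV[R]_n, 0 <= (x^T *m X *m x) 0 0.

Definition loewner_le {R : realType} {n : nat} (X Y : 'M[R]_n) : Prop := psd (Y - X).

Definition trace_norm_le {R : realType} {n : nat} (W : 'M[R]_n) (t : R) : Prop :=
  exists (U V : 'M[R]_n) (s : 'rV[R]_n),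
    [/\ U^T *m U = 1%:M, V^T *m V = 1%:M, (forall i, 0 <= s 0 i),
        W = U *m diag_mx s *m V^T & \sum_i s 0 i <= t].

Definition opnorm_le {R : realType} {n : nat} (M : 'M[R]_n) (t : R) : Prop :=
  0 <= t /\ forall x : 'cV[R]_n,
    \sum_i ((M *m x) i 0) ^+ 2 <= t ^+ 2 * \sum_i (x i 0) ^+ 2.

(* The S x S principal submatrix, padded with zeros (same operator norm). *)
Definition restrict {R : realType} {n : nat} (S : {set 'I_n}) (M : 'M[R]_n) : 'M[R]_n :=
  \matrix_(i, j) (if (i \in S) && (j \in S) then M i j else 0).

Definition Jmat {R : realType} (n : nat) : 'M[R]_n := const_mx 1.

Definition Lmat {R : realType} {n k : nat} (comm : 'I_n -> 'I_k) : 'M[R]_n :=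
  \matrix_(i, j) (if comm i == comm j then 1 else -1).

Definition sdp_feasible {R : realType} {n : nat} (A : 'M[R]_n) (a b chi : R)
    (W F : 'M[R]_n) : Prop :=
  let M := hadamard (A - (a / n%:R) *: Jmat n - F) W in
  [/\ (forall i j, 0 <= W i j <= 1), (forall i j, 0 <= F i j <= 1),
      trace_norm_le W n%:R,
      loewner_le (- (chi * Num.sqrt (a + b)) *: (1%:M : 'M[R]_n)) M &
      loewner_le M ((chi * Num.sqrt (a + b)) *: (1%:M : 'M[R]_n))].

Definition sdp_value {R : realType} {n : nat} (W : 'M[R]_n) : R :=
  \sum_i \sum_j W i j.

Definition sdp_optimal {R : realType} {n : nat} (A : 'M[R]_n) (a b chi : R)
    (W : 'M[R]_n) : Prop :=
  (exists F, sdp_feasible A a b chi W F) /\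
  forall W' F', sdp_feasible A a b chi W' F' -> sdp_value W' <= sdp_value W.

(* Sample space: a bit for every ordered pair; only pairs (i,j) with i < j are
   random (edge indicators), the others are a.s. false. *)
Definition sample (n : nat) := {ffun 'I_n * 'I_n -> bool}.

Definition adj_of {R : realType} {n : nat} (w : sample n) : 'M[R]_n :=
  \matrix_(i, j) (if (i < j)%N then (w (i, j))%:R
                  else if (j < i)%N then (w (j, i))%:R else 0).

Definition edge_prob {R : realType} {n k : nat} (comm : 'I_n -> 'I_k) (a b : R)
    (i j : 'I_n) : R :=
  if comm i == comm j then a / n%:R else b / n%:R.

Definition sbm_weight {R : realType} {n k : nat} (comm : 'I_n -> 'I_k) (a b : R)
    (w : sample n) : R :=
  \prod_(p : 'I_n * 'I_n)
    (if (p.1 < p.2)%N then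
       (if w p then edge_prob comm a b p.1 p.2 else 1 - edge_prob comm a b p.1 p.2)
     else (if w p then 0 else 1)).

Definition sbm_prob {R : realType} {n k : nat} (comm : 'I_n -> 'I_k) (a b : R)
    (E : sample n -> Prop) : R :=
  \sum_(w : sample n | `[< E w >]) sbm_weight comm a b w.

Definition is_graph {R : realType} {n : nat} (A : 'M[R]_n) : Prop :=
  A^T = A /\ (forall i, A i i = 0) /\ (forall i j, A i j = 0 \/ A i j = 1).

Definition semirandom_ok {R : realType} {n k : nat} (comm : 'I_n -> 'I_k)
    (A0 A1 : 'M[R]_n) : Prop :=
  is_graph A1 /\ forall i j,
    (comm i == comm j -> A0 i j <= A1 i j) /\ (comm i != comm j -> A1 i j <= A0 i j).

Definition corrupt_ok {R : realType} {n : nat} (eps : R) (A1 A : 'M[R]_n) : Prop :=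
  is_graph A /\ exists T : {set 'I_n},
    #|T|%:R <= eps * n%:R /\
    forall i j, i \notin T -> j \notin T -> A i j = A1 i j.

Definition eps_corruption {R : realType} {n k : nat} (comm : 'I_n -> 'I_k) (eps : R)
    (A0 A : 'M[R]_n) : Prop :=
  exists A1, semirandom_ok comm A0 A1 /\ corrupt_ok eps A1 A.

Definition chi_property {R : realType} (chi : R) : Prop :=
  forall (n k : nat) (comm : 'I_n -> 'I_k) (a b : R),
    (0 < n)%N -> 0 <= b -> b < a -> a <= n%:R ->
    let C := (Num.sqrt a - Num.sqrt b) ^+ 2 in
    1 - 2 / (n%:R ^+ 2) <=
    sbm_prob comm a b (fun w => exists S : {set 'I_n},
      (1 - expR (- (2 * C))) * n%:R <= #|S|%:R /\
      opnorm_le (restrict S (adj_of w - ((a + b) / (2 * n%:R)) *: Jmat n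
                                     - ((a - b) / (2 * n%:R)) *: Lmat comm))
                (chi * Num.sqrt (a + b))).

From HB Require Import structures.
From mathcomp Require Import all_boot all_order all_algebra.
From mathcomp Require Import boolp reals sequences exp.
From mathcomp Require Import ring lra.
Import Order.TTheory GRing.Theory Num.Theory.
Set Implicit Arguments. Unset Strict Implicit. Unset Printing Implicit Defensive.
Local Open Scope ring_scope.

(** Let [G] be the good vertices: those of the set [S] given by the spectral
   property of [chi], minus the corrupted ones.  The matrix [W*] that is [1]
   exactly on same-community pairs of [G], together with [F* = A1 - A0] on
   those pairs, is feasible for the SDP: its constraint matrix is the
   restriction to the community blocks of [G] of the centred matrix [Z], whose
   operator norm is at most [lam = chi sqrt(a + b)], and its trace norm is
   [#|G| <= n], as one Householder-type orthogonal matrix diagonalises all the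
   blocks at once.  By optimality [W] has at least the mass of [W*].  Trace
   duality [<Y, W> <= lam |W|_* <= lam n] for block restrictions [Y] of [+-Z],
   the SDP constraint tested on the indicator of [G], and the fact that the
   adversary can only have removed cross-community edges between good vertices
   show that the cross-community mass of [W] on [G x G] is at most
   [4 lam n^2 / (a - b)].  Pairs outside [G x G] contribute at most
   [2 n (n - #|G|)] with [n - #|G| <= (e^(-2C) + eps) n]; the constants follow
   from [a - b >= sqrt C sqrt (a + b)] and [2 e^(-2C) <= chi / sqrt C], the
   spectral property forcing [chi^2 >= 1/2]. *)

Section QuadraticForm.
Variables (R : realType) (n : nat).
Implicit Types (Y Z : 'M[R]_n) (x y : 'I_n -> R) (l : R).

Definition qform Y x := \sum_i \sum_j x i * Y i j * x j.
Definition bform Y x y := \sum_i \sum_j x i * Y i j * y j.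
Definition sqnorm x := \sum_i x i ^+ 2.
Definition qbounded Y l := forall x, `|qform Y x| <= l * sqnorm x.

Lemma natr_card (A : {set 'I_n}) : (#|A|%:R : R) = \sum_i (if i \in A then 1 else 0).
Proof. by rewrite -big_mkcond /= sumr_const. Qed.

Lemma qform_mx Y (x : 'cV[R]_n) : (x^T *m Y *m x) 0 0 = qform Y (fun i => x i 0).
Proof.
rewrite /qform mxE; under eq_bigr do rewrite mxE mulr_suml.
rewrite exchange_big /=; apply: eq_bigr => i _; apply: eq_bigr => j _.
by rewrite mxE.
Qed.

Lemma qformD Y Z x : qform (Y + Z) x = qform Y x + qform Z x.
Proof.
rewrite /qform -big_split; apply: eq_bigr => i _ /=; rewrite -big_split.
by apply: eq_bigr => j _ /=; rewrite mxE; ring.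
Qed.

Lemma qformN Y x : qform (- Y) x = - qform Y x.
Proof.
rewrite /qform -sumrN; apply: eq_bigr => i _; rewrite -sumrN.
by apply: eq_bigr => j _ /=; rewrite mxE; ring.
Qed.

Lemma qform_scalar l x : qform (l *: 1%:M) x = l * sqnorm x.
Proof.
rewrite /qform /sqnorm mulr_sumr; apply: eq_bigr => i _.
rewrite (bigD1 i) //= big1 => [|j /negbTE ji].
  by rewrite !mxE eqxx mulr1n addr0; ring.
by rewrite !mxE eq_sym ji mulr0n mulr0 mulr0 mul0r.
Qed.

Lemma qform_ones Y : qform Y (fun _ => 1) = \sum_i \sum_j Y i j.
Proof. by apply: eq_bigr => i _; apply: eq_bigr => j _; rewrite mul1r mulr1. Qed.

Lemma sqnorm_ones : sqnorm (fun _ => 1) = n%:R.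
Proof. by rewrite /sqnorm expr1n sumr_const card_ord. Qed.

Lemma qboundedN Y l : qbounded Y l -> qbounded (- Y) l.
Proof. by move=> hY x; rewrite qformN normrN. Qed.

Lemma loewner_qbounded Y l :
  loewner_le (- l *: 1%:M) Y -> loewner_le Y (l *: 1%:M) -> Y^T = Y /\ qbounded Y l.
Proof.
move=> [T1 P1] [T2 P2]; split.
  move: T2; rewrite !linearB /= linearZ /= trmx1 => T2.
  by apply: oppr_inj; apply: (addrI (l *: 1%:M)).
move=> x; pose xv := \col_i x i.
have := P1 xv; have := P2 xv; rewrite !qform_mx.
have -> : (fun i => xv i 0) = x by apply: funext => i; rewrite mxE.
rewrite scaleNr opprK !qformD !qformN !qform_scalar => h1 h2.
by rewrite ler_norml; apply/andP; split; lra.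
Qed.

Lemma qbounded_loewner Y l : Y^T = Y -> qbounded Y l ->
  loewner_le (- l *: 1%:M) Y /\ loewner_le Y (l *: 1%:M).
Proof.
move=> YT hY; split; split.
- by rewrite scaleNr opprK !linearD /= linearZ /= trmx1 YT.
- move=> x; rewrite qform_mx scaleNr opprK qformD qform_scalar.
  by have := hY (fun i => x i 0); rewrite ler_norml => /andP[]; lra.
- by rewrite !linearB /= linearZ /= trmx1 YT.
- move=> x; rewrite qform_mx qformD qformN qform_scalar.
  by have := hY (fun i => x i 0); rewrite ler_norml => /andP[]; lra.
Qed.

Lemma opnorm_qbounded Z l : opnorm_le Z l -> 0 < l -> qbounded Z l.
Proof.
move=> [_ hZ] l0 y; pose yv := \col_i y i.
have -> : qform Z y = \sum_i y i * (Z *m yv) i 0.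
  apply: eq_bigr => i _; rewrite mxE mulr_sumr; apply: eq_bigr => j _.
  by rewrite mxE mulrA.
have hZy : \sum_i ((Z *m yv) i 0) ^+ 2 <= l ^+ 2 * sqnorm y.
  have hy : \sum_i (yv i 0) ^+ 2 = sqnorm y by apply: eq_bigr => i _; rewrite mxE.
  by have := hZ yv; rewrite hy.
have amgm (u v : R) : 2 * l * `|u * v| <= l ^+ 2 * u ^+ 2 + v ^+ 2.
  rewrite normrM -[u ^+ 2](real_normK (num_real u)) -[v ^+ 2](real_normK (num_real v)).
  by have := sqr_ge0 (l * `|u| - `|v|); nra.
have hyZy : 2 * l * `|\sum_i y i * (Z *m yv) i 0| <=
    l ^+ 2 * sqnorm y + \sum_i ((Z *m yv) i 0) ^+ 2.
  apply: le_trans (_ : 2 * l * \sum_i `|y i * (Z *m yv) i 0| <= _).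
    by rewrite ler_pM2l ?ler_norm_sum //; lra.
  rewrite mulr_sumr /sqnorm mulr_sumr -big_split /=; apply: ler_sum => i _.
  exact: amgm.
by rewrite -(ler_pM2l (_ : 0 < 2 * l)); lra.
Qed.

Lemma bform_sym Y x y : Y^T = Y -> bform Y x y = bform Y y x.
Proof.
move=> YT; rewrite /bform exchange_big; apply: eq_bigr => i _; apply: eq_bigr => j _.
have -> : Y j i = Y i j by rewrite -[in LHS]YT mxE.
by ring.
Qed.

Lemma bform_le_polar Y l x y : Y^T = Y -> qbounded Y l ->
  2 * bform Y x y <= l * (sqnorm x + sqnorm y).
Proof.
move=> YT hY.
have polar : qform Y (fun i => x i + y i) - qform Y (fun i => x i - y i) =
    2 * bform Y x y + 2 * bform Y y x.
  rewrite /qform /bform !mulr_sumr -sumrB -big_split; apply: eq_bigr => i _ /=.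
  rewrite !mulr_sumr -sumrB -big_split; apply: eq_bigr => j _ /=; ring.
have parallelogram : sqnorm (fun i => x i + y i) + sqnorm (fun i => x i - y i) =
    2 * sqnorm x + 2 * sqnorm y.
  rewrite /sqnorm !mulr_sumr -!big_split; apply: eq_bigr => i _ /=; ring.
rewrite [bform Y y x](bform_sym _ _ YT) in polar.
move: (hY (fun i => x i + y i)) (hY (fun i => x i - y i)).
rewrite !ler_norml => /andP[h1 h1'] /andP[h2 h2'].
have : l * sqnorm (fun i => x i + y i) + l * sqnorm (fun i => x i - y i) =
   2 * (l * (sqnorm x + sqnorm y)) by rewrite -mulrDr parallelogram; ring.
lra.
Qed.

Lemma trace_norm_le_trans (W : 'M[R]_n) s t :
  trace_norm_le W s -> s <= t -> trace_norm_le W t.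
Proof.
move=> [U [V [sv [hU hV hsv hW hs]]]] st.
by exists U, V, sv; split=> //; apply: le_trans st.
Qed.

Lemma trace_norm_duality W Y t l : trace_norm_le W t -> Y^T = Y -> qbounded Y l ->
  0 <= l -> \sum_i \sum_j Y i j * W i j <= l * t.
Proof.
move=> [U [V [s [hU hV hs -> ht]]]] YT hY l0.
have unit_col (M : 'M[R]_n) k : M^T *m M = 1%:M -> sqnorm (fun i => M i k) = 1.
  move=> hM; have := congr1 (fun X : 'M[R]_n => X k k) hM.
  rewrite !mxE eqxx mulr1n => <-; by apply: eq_bigr => i _; rewrite mxE.
have -> : \sum_i \sum_j Y i j * (U *m diag_mx s *m V^T) i j =
    \sum_k s 0 k * bform Y (fun i => U i k) (fun j => V j k).
  under eq_bigr => i _ do under eq_bigr => j _ do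
    rewrite mxE mul_mx_diag mulr_sumr.
  under eq_bigr => i _ do rewrite exchange_big.
  rewrite exchange_big; apply: eq_bigr => k _ /=.
  rewrite /bform mulr_sumr; apply: eq_bigr => i _; rewrite mulr_sumr.
  by apply: eq_bigr => j _; rewrite !mxE; ring.
apply: le_trans (_ : \sum_k s 0 k * l <= _); last by rewrite -mulr_suml mulrC ler_wpM2l.
apply: ler_sum => k _; rewrite ler_wpM2l //.
by have := bform_le_polar (fun i => U i k) (fun j => V j k) YT hY; rewrite !unit_col //; lra.
Qed.

Definition block_restrict m (h : 'I_n -> 'I_m) (G : {set 'I_n}) Z : 'M[R]_n :=
  \matrix_(i, j) (if (i \in G) && (j \in G) && (h i == h j) then Z i j else 0).

Lemma block_restrict_tr m (h : 'I_n -> 'I_m) G Z :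
  Z^T = Z -> (block_restrict h G Z)^T = block_restrict h G Z.
Proof.
move=> ZT; apply/matrixP => i j; rewrite !mxE (eq_sym (h j)).
have -> : Z j i = Z i j by rewrite -[in RHS]ZT mxE.
by case: (i \in G); case: (j \in G).
Qed.

(* The quadratic form splits over the blocks, and the restricted vectors have
   disjoint supports. *)
Lemma qbounded_block_restrict m (h : 'I_n -> 'I_m) G Z l :
  qbounded Z l -> 0 <= l -> qbounded (block_restrict h G Z) l.
Proof.
move=> hZ l0 x; pose xc c i := if (i \in G) && (h i == c) then x i else 0.
have -> : qform (block_restrict h G Z) x = \sum_c qform Z (xc c).
  rewrite /qform [RHS]exchange_big; apply: eq_bigr => i _ /=.
  rewrite [RHS]exchange_big; apply: eq_bigr => j _ /=.
  rewrite mxE (bigD1 (h i)) //= big1 => [|c hc]; last first.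
    by rewrite /xc eq_sym (negbTE hc) andbF !mul0r.
  rewrite /xc eqxx andbT addr0.
  case: (i \in G); case: (j \in G) => /=; rewrite ?mulr0 ?mul0r //.
  by rewrite eq_sym; case: (h j == h i); rewrite ?mulr0 ?mul0r.
apply: le_trans (ler_norm_sum _ _ _) _.
apply: le_trans (_ : \sum_c l * sqnorm (xc c) <= _); first by apply: ler_sum.
rewrite -mulr_sumr ler_wpM2l // /sqnorm exchange_big; apply: ler_sum => i _ /=.
rewrite (bigD1 (h i)) //= big1 => [|c hc]; last by rewrite /xc eq_sym (negbTE hc) andbF expr0n.
by rewrite /xc eqxx andbT addr0; case: (i \in G); rewrite ?expr0n ?sqr_ge0.
Qed.

End QuadraticForm.

Section BlockOnesTraceNorm.
Variables (R : realType) (n m : nat) (h : 'I_n -> 'I_m) (G : {set 'I_n}).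
Implicit Types (c d : 'I_m) (x y : 'cV[R]_n).

Definition part c := [set i in G | h i == c].
Definition part_size c : R := #|part c|%:R.
Definition part_unit c : 'cV[R]_n :=
  \col_i (if i \in part c then (Num.sqrt (part_size c))^-1 else 0).
Definition part_pivot c : 'cV[R]_n :=
  if [pick i in part c] is Some p then delta_mx p 0 else 0.
Definition sqnormc x := (x^T *m x) 0 0.
Definition reflection_dir c := part_pivot c - part_unit c.
Definition reflection_proj c :=
  (sqnormc (reflection_dir c))^-1 *: (reflection_dir c *m (reflection_dir c)^T).
Definition householder : 'M[R]_n := 1%:M - 2 *: \sum_c reflection_proj c.
Definition part_sizes : 'rV[R]_n :=
  \row_j \sum_c (if [pick i in part c] == Some j then part_size c else 0).
Definition supported_in c x := forall i, i \notin part c -> x i 0 = 0.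

Lemma tr_mulmx_col x y : (x^T *m y) 0 0 = \sum_i x i 0 * y i 0.
Proof. by rewrite mxE; apply: eq_bigr => i _; rewrite mxE. Qed.

Lemma outer_mxE x y i j : (x *m y^T) i j = x i 0 * y j 0.
Proof. by rewrite mxE big_ord1 mxE. Qed.

Lemma part_size_ge0 c : 0 <= part_size c.
Proof. exact: ler0n. Qed.

Lemma part_size_neq0 c i : i \in part c -> part_size c != 0.
Proof. by move=> hi; rewrite pnatr_eq0 -lt0n card_gt0; apply/set0Pn; exists i. Qed.

Lemma part_pivotE c i :
  part_pivot c i 0 = if [pick i in part c] is Some p then (i == p)%:R else 0.
Proof. by rewrite /part_pivot; case: pickP => [p _|_]; rewrite mxE // eqxx andbT. Qed.

Lemma supported_part_pivot c : supported_in c (part_pivot c).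
Proof.
move=> i hi; rewrite part_pivotE; case: pickP => // p hp.
by case: eqP => // eip; move: hi; rewrite eip hp.
Qed.

Lemma supported_reflection_dir c : supported_in c (reflection_dir c).
Proof.
by move=> i hi; rewrite !mxE (supported_part_pivot hi) (negbTE hi) subrr.
Qed.

Lemma supported_orth c d x y :
  supported_in c x -> supported_in d y -> c != d -> x^T *m y = 0.
Proof.
move=> hx hy cd; apply/matrixP => i0 j0; rewrite (ord1 i0) (ord1 j0) tr_mulmx_col mxE.
apply: big1 => i _; case: (boolP (i \in part c)) => ic; last by rewrite hx // mul0r.
rewrite hy ?mulr0 //; move: ic; rewrite !inE => /andP[_ /eqP ->].
by rewrite (negbTE cd) andbF.
Qed.

Lemma sqnormc_part_unit c :
  sqnormc (part_unit c) = if [pick i in part c] is Some _ then 1 else 0.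
Proof.
rewrite /sqnormc tr_mulmx_col.
have -> : \sum_i part_unit c i 0 * part_unit c i 0 =
    \sum_i (if i \in part c then (part_size c)^-1 else 0).
  apply: eq_bigr => i _; rewrite !mxE; case: (i \in part c); last by rewrite mulr0.
  by rewrite -invfM -expr2 sqr_sqrtr // part_size_ge0.
case: pickP => [p hp|h0]; last by rewrite big1 // => i _; rewrite h0.
rewrite -big_mkcond /= sumr_const -mulr_natl mulfV //; exact: part_size_neq0 hp.
Qed.

Lemma sqnormc_part_pivot c :
  sqnormc (part_pivot c) = if [pick i in part c] is Some _ then 1 else 0.
Proof.
rewrite /sqnormc tr_mulmx_col; under eq_bigr do rewrite part_pivotE.
case: pickP => [p _|_]; last by rewrite big1 // => i _; rewrite mulr0.
rewrite (bigD1 p) //= big1 => [|i /negbTE ->]; last by rewrite mulr0.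
by rewrite eqxx mulr1 addr0.
Qed.

Lemma sqnormc_eq0 x : sqnormc x = 0 -> x = 0.
Proof.
rewrite /sqnormc tr_mulmx_col => /eqP; rewrite psumr_eq0 => [/allP hx|i _]; last first.
  by rewrite -expr2 sqr_ge0.
apply/matrixP => i j; rewrite (ord1 j) mxE.
by have := hx i (mem_index_enum _); rewrite -expr2 sqrf_eq0 => /eqP.
Qed.

(* [part_pivot c] and [part_unit c] have the same length. *)
Lemma reflection_dir_pivot c :
  2 * ((reflection_dir c)^T *m part_pivot c) 0 0 = sqnormc (reflection_dir c).
Proof.
have := sqnormc_part_pivot c; rewrite -sqnormc_part_unit /sqnormc !tr_mulmx_col => E.
apply/eqP; rewrite -subr_eq0 mulr_sumr -sumrB.
have -> : \sum_i (2 * (reflection_dir c i 0 * part_pivot c i 0) -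
                   reflection_dir c i 0 * reflection_dir c i 0) =
   \sum_i (part_pivot c i 0 * part_pivot c i 0 - part_unit c i 0 * part_unit c i 0).
  by apply: eq_bigr => i _; rewrite !mxE; ring.
by rewrite sumrB E subrr.
Qed.

Lemma reflection_proj_pivot c d :
  2 *: (reflection_proj c *m part_pivot d) = if c == d then reflection_dir c else 0.
Proof.
rewrite /reflection_proj -scalemxAl -mulmxA; case: eqVneq => [<-|cd]; last first.
  by rewrite (supported_orth (@supported_reflection_dir c) (@supported_part_pivot d) cd)
     mulmx0 !scaler0.
rewrite (mx11_scalar (_ *m part_pivot c)) mul_mx_scalar !scalerA.
have [s0|s0] := eqVneq (sqnormc (reflection_dir c)) 0.
  by rewrite (sqnormc_eq0 s0) !scaler0.
by rewrite mulrAC reflection_dir_pivot mulfV // scale1r.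
Qed.

(* [householder] is the product of the commuting reflections swapping
   [part_pivot c] and [part_unit c]. *)
Lemma householder_pivot c : householder *m part_pivot c = part_unit c.
Proof.
rewrite /householder mulmxBl mul1mx -scalemxAl mulmx_suml scaler_sumr.
rewrite (bigD1 c) //= big1 => [|d dc]; last by rewrite reflection_proj_pivot (negbTE dc).
by rewrite reflection_proj_pivot eqxx addr0 opprB addrC subrK.
Qed.

Lemma householder_tr : householder^T = householder.
Proof.
rewrite /householder linearB /= trmx1 linearZ /= linear_sum /=.
by congr (_ - 2 *: _); apply: eq_bigr => c _; rewrite linearZ /= trmx_mul trmxK.
Qed.

Lemma reflection_proj_mul c d :
  reflection_proj c *m reflection_proj d = if c == d then reflection_proj c else 0.
Proof.
rewrite /reflection_proj -scalemxAl -scalemxAr !mulmxA -(mulmxA (reflection_dir c)).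
case: eqVneq => [<-|cd]; last first.
  rewrite (supported_orth (@supported_reflection_dir c) (@supported_reflection_dir d) cd).
  by rewrite mulmx0 mul0mx !scaler0.
rewrite (mx11_scalar (_ *m reflection_dir c)) mul_mx_scalar -scalemxAl !scalerA.
have [s0|s0] := eqVneq (sqnormc (reflection_dir c)) 0; first by rewrite s0 invr0 !mul0r.
by rewrite -/(sqnormc _) mulVf // mulr1.
Qed.

Lemma householder_orthogonal : householder^T *m householder = 1%:M.
Proof.
rewrite householder_tr /householder mulmxBl mul1mx mulmxBr mulmx1.
rewrite -scalemxAl -scalemxAr scalerA mulmx_suml.
set P := \sum_c reflection_proj c.
have -> : \sum_c reflection_proj c *m P = P.
  apply: eq_bigr => c _; rewrite mulmx_sumr (bigD1 c) //= big1 => [|d dc].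
    by rewrite reflection_proj_mul eqxx addr0.
  by rewrite reflection_proj_mul eq_sym (negbTE dc).
have -> : (2 * 2) *: P = 2 *: P + 2 *: P by rewrite -scalerDl; congr (_ *: _); ring.
have -> : 2 *: P - (2 *: P + 2 *: P) = - (2 *: P).
  by rewrite [- (_ + _)]opprD addrA subrr add0r.
by rewrite opprK subrK.
Qed.

Lemma diag_part_sizes :
  diag_mx part_sizes = \sum_c part_size c *: (part_pivot c *m (part_pivot c)^T).
Proof.
apply/matrixP => i j; rewrite summxE !mxE.
case: (eqVneq i j) => [<-|ij].
  rewrite mulr1n; apply: eq_bigr => c _; rewrite mxE outer_mxE !part_pivotE.
  case: pickP => [p _|_]; last by rewrite !mulr0.
  case: (eqVneq p i) => [->|pi]; first by rewrite eqxx !mulr1.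
  have -> : (Some p == Some i) = false by apply/eqP => -[e]; move: pi; rewrite e eqxx.
  by rewrite mul0r mulr0.
rewrite mulr0n; symmetry; apply: big1 => c _; rewrite mxE outer_mxE !part_pivotE.
case: pickP => [p _|_]; last by rewrite !mulr0.
case: (eqVneq i p) => [eip|]; last by rewrite mul0r mulr0.
by rewrite -eip eq_sym (negbTE ij) !mulr0.
Qed.

Lemma block_ones_decomp :
  \sum_c part_size c *: (part_unit c *m (part_unit c)^T) =
  block_restrict h G (const_mx 1).
Proof.
apply/matrixP => i j; rewrite summxE !mxE (bigD1 (h i)) //= big1 => [|c hc]; last first.
  rewrite mxE outer_mxE [part_unit c i 0]mxE.
  by rewrite inE eq_sym (negbTE hc) andbF mul0r mulr0.
rewrite addr0 mxE outer_mxE !mxE !inE eqxx andbT (eq_sym (h i)).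
case: (boolP (i \in G)) => iG; last by rewrite mul0r mulr0.
case: (j \in G) (h j == h i) => [] [] /=; rewrite ?mulr0 //.
have hiG : i \in part (h i) by rewrite inE iG eqxx.
by rewrite -invfM -expr2 sqr_sqrtr ?part_size_ge0 // mulfV // (part_size_neq0 hiG).
Qed.

Lemma sum_part_sizes : \sum_j part_sizes 0 j <= #|G|%:R.
Proof.
under eq_bigr do rewrite mxE.
rewrite exchange_big /=; apply: le_trans (_ : \sum_c part_size c <= _).
  apply: ler_sum => c _; case: pickP => [p _|_]; last by rewrite big1 ?part_size_ge0.
  rewrite (bigD1 p) //= eqxx big1 ?addr0 // => j hj.
  by case: eqP => // - [e]; move: hj; rewrite e eqxx.
rewrite natr_card le_eqVlt; apply/orP; left; apply/eqP.
under eq_bigr do rewrite /part_size natr_card.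
rewrite exchange_big; apply: eq_bigr => i _ /=.
rewrite (bigD1 (h i)) //= big1 => [|c hc]; last by rewrite inE eq_sym (negbTE hc) andbF.
by rewrite inE eqxx andbT addr0.
Qed.

Lemma trace_norm_block_ones : trace_norm_le (block_restrict h G (const_mx (1 : R))) #|G|%:R.
Proof.
exists householder, householder, part_sizes; split.
- exact: householder_orthogonal.
- exact: householder_orthogonal.
- move=> i; rewrite mxE; apply: sumr_ge0 => c _; case: eqP => // _; exact: part_size_ge0.
- rewrite -block_ones_decomp diag_part_sizes householder_tr mulmx_sumr mulmx_suml.
  apply: eq_bigr => c _; rewrite -scalemxAr -scalemxAl !mulmxA.
  by rewrite -(mulmxA _ _ householder) -[X in _ *m (_ *m X)]householder_tr -trmx_mul
     householder_pivot.
- exact: sum_part_sizes.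
Qed.

End BlockOnesTraceNorm.

Section PlantedSolution.
Variables (R : realType) (chi : R) (n k : nat) (comm : 'I_n -> 'I_k) (a b : R).
Variables (A0 A1 A W : 'M[R]_n) (S T : {set 'I_n}).
Hypothesis n_gt0 : (0 < n)%N.
Hypothesis ba : b < a.
Let lam := chi * Num.sqrt (a + b).
Hypothesis lam_gt0 : 0 < lam.
Hypothesis graphA0 : is_graph A0.
Hypothesis semirandomA1 : semirandom_ok comm A0 A1.
Hypothesis A_A1 : forall i j, i \notin T -> j \notin T -> A i j = A1 i j.
Let Z := restrict S (A0 - ((a + b) / (2 * n%:R)) *: Jmat n
                        - ((a - b) / (2 * n%:R)) *: Lmat comm).
Hypothesis opnormZ : opnorm_le Z lam.
Hypothesis optW : sdp_optimal A a b chi W.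
Let G := S :\: T.

Let natn_neq0 : (n%:R : R) != 0.
Proof. by rewrite pnatr_eq0 -lt0n. Qed.

Lemma ZE i j : Z i j = if (i \in S) && (j \in S) then
  A0 i j - (a + b) / (2 * n%:R) - (a - b) / (2 * n%:R) * (if comm i == comm j then 1 else -1)
  else 0.
Proof. by rewrite !mxE mulr1. Qed.

Lemma Z_tr : Z^T = Z.
Proof.
apply/matrixP => i j; rewrite mxE !ZE (eq_sym (comm j)).
have [A0T _] := graphA0; have -> : A0 j i = A0 i j by rewrite -[in RHS]A0T mxE.
by case: (i \in S); case: (j \in S).
Qed.

Lemma qbounded_Z : qbounded Z lam.
Proof. exact: opnorm_qbounded. Qed.

Lemma good_S i : i \in G -> i \in S.
Proof. by rewrite inE => /andP[]. Qed.

Lemma good_notT i : i \in G -> i \notin T.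
Proof. by rewrite inE => /andP[]. Qed.

Definition planted_W : 'M[R]_n := block_restrict comm G (const_mx 1).

Definition planted_F : 'M[R]_n := \matrix_(i, j)
  (if (i \in G) && (j \in G) && (comm i == comm j) then A1 i j - A0 i j else 0).

Lemma planted_feasible : sdp_feasible A a b chi planted_W planted_F.
Proof.
have [graphA1 monoA1] := semirandomA1.
rewrite /sdp_feasible /=.
have -> : hadamard (A - (a / n%:R) *: Jmat n - planted_F) planted_W =
          block_restrict comm G Z.
  apply/matrixP => i j; rewrite !mxE.
  case: ifP => [/andP[/andP[iG jG] cij]|_]; last by rewrite mulr0.
  rewrite (good_S iG) (good_S jG) cij A_A1 ?good_notT //= !mulr1.
  by field.
have [ZL ZU] := qbounded_loewner (block_restrict_tr comm G Z_tr)
  (qbounded_block_restrict comm G qbounded_Z (ltW lam_gt0)).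
split=> //.
- by move=> i j; rewrite !mxE; case: ifP; rewrite ?lexx ?ler01.
- move=> i j; rewrite mxE; case: ifP => [/andP[_ cij]|_]; last by rewrite lexx ler01.
  have [+ _] := monoA1 i j => /(_ cij).
  have [_ [_ ha0]] := graphA0; have [_ [_ ha1]] := graphA1.
  by case: (ha0 i j) => ->; case: (ha1 i j) => -> //= *; lra.
- apply: (trace_norm_le_trans (trace_norm_block_ones R comm G)).
  by rewrite ler_nat -[X in (_ <= X)%N]card_ord max_card.
Qed.

(* Let [M] be the SDP constraint matrix of [W].  The differences [X1 - X2] and
   [Y1 - Y2] of the two block restrictions below are the sums of [Z o W] and of
   [M] over the cross-community pairs of good vertices, and on such a pair
   [Z_ij W_ij - M_ij >= (a - b)/n W_ij], since the adversary only removes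
   cross-community edges and [F >= 0]. *)
Lemma cross_good_mass_le :
  (a - b) / n%:R * \sum_i \sum_j
     (if (i \in G) && (j \in G) && (comm i != comm j) then W i j else 0)
  <= 4 * lam * n%:R.
Proof.
have [[F [W01 F01 trW ML MU]] _] := optW.
set M := hadamard _ W in ML MU.
have [MT qbM] := loewner_qbounded ML MU.
have lam_ge0 := ltW lam_gt0.
pose all_same := fun _ : 'I_n => (ord0 : 'I_1).
set X1 := \sum_i \sum_j block_restrict all_same G Z i j * W i j.
set X2 := \sum_i \sum_j block_restrict comm G Z i j * W i j.
set Y1 := \sum_i \sum_j block_restrict all_same G M i j.
set Y2 := \sum_i \sum_j block_restrict comm G M i j.
have hX1 : X1 <= lam * n%:R.
  exact: trace_norm_duality trW (block_restrict_tr all_same G Z_tr)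
    (qbounded_block_restrict all_same G qbounded_Z lam_ge0) lam_ge0.
have hX2 : - X2 <= lam * n%:R.
  have := trace_norm_duality trW (etrans (linearN _ _) (congr1 -%R
      (block_restrict_tr comm G Z_tr)))
    (qboundedN (qbounded_block_restrict comm G qbounded_Z lam_ge0)) lam_ge0.
  congr (_ <= _); rewrite /X2 -sumrN; apply: eq_bigr => i _; rewrite -sumrN.
  by apply: eq_bigr => j _; rewrite mxE mulNr.
have hY1 : - (lam * n%:R) <= Y1.
  have := qbounded_block_restrict all_same G qbM lam_ge0 (fun _ => 1).
  by rewrite qform_ones sqnorm_ones ler_norml => /andP[].
have hY2 : Y2 <= lam * n%:R.
  have := qbounded_block_restrict comm G qbM lam_ge0 (fun _ => 1).
  by rewrite qform_ones sqnorm_ones ler_norml => /andP[].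
apply: le_trans (_ : X1 - X2 - (Y1 - Y2) <= _); last by lra.
rewrite mulr_sumr -!sumrB; apply: ler_sum => i _.
rewrite mulr_sumr -!sumrB; apply: ler_sum => j _; rewrite !mxE.
case: (boolP (i \in G)) => iG /=; last by rewrite !mul0r mulr0 !subrr.
case: (boolP (j \in G)) => jG /=; last by rewrite !mul0r mulr0 !subrr.
case: (boolP (comm i == comm j)) => cij /=; first by rewrite mulr0 !subrr.
have [_ monoA1] := semirandomA1; have [_ /(_ cij) A1_le] := monoA1 i j.
have /andP[F_ge0 _] := F01 i j; have /andP[W_ge0 _] := W01 i j.
have := mulr_ge0 (_ : 0 <= A0 i j - A1 i j + F i j) W_ge0.
rewrite mul0r !subr0 (good_S iG) (good_S jG) /= A_A1 ?good_notT // => /(_ ltac:(lra)).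
have -> : (A0 i j - (a + b) / (2 * n%:R) * 1 - (a - b) / (2 * n%:R) * -1) * W i j -
   (A1 i j - a / n%:R * 1 - F i j) * W i j =
   (a - b) / n%:R * W i j + (A0 i j - A1 i j + F i j) * W i j by field.
lra.
Qed.

Lemma sum_sqr_card_classes : \sum_c (#|[set i | comm i == c]|%:R : R) ^+ 2 =
  \sum_i \sum_j (if comm i == comm j then 1 else 0).
Proof.
under eq_bigr do rewrite natr_card expr2 mulr_suml.
under eq_bigr do under eq_bigr do rewrite mulr_sumr.
rewrite exchange_big; apply: eq_bigr => i _ /=.
rewrite exchange_big; apply: eq_bigr => j _ /=.
rewrite (bigD1 (comm i)) //= big1 => [|c hc]; last by rewrite !inE eq_sym (negbTE hc) mul0r.
by rewrite !inE eqxx mul1r addr0 eq_sym.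
Qed.

Lemma mass_outside_good :
  \sum_i \sum_j (1 - (if (i \in G) && (j \in G) then 1 else 0) : R) <=
  2 * n%:R * (n%:R - #|G|%:R).
Proof.
have -> : \sum_i \sum_j (1 - (if (i \in G) && (j \in G) then 1 else 0) : R) =
    n%:R ^+ 2 - #|G|%:R ^+ 2.
  have sqr_card : (#|G|%:R : R) ^+ 2 =
      \sum_i \sum_j (if (i \in G) && (j \in G) then 1 else 0).
    rewrite natr_card expr2 mulr_suml; apply: eq_bigr => i _; rewrite mulr_sumr.
    by apply: eq_bigr => j _; case: (i \in G); case: (j \in G); rewrite ?mulr1 ?mulr0.
  have sqr_n : (n%:R : R) ^+ 2 = \sum_(i < n) \sum_(j < n) 1.
    rewrite expr2 mulr_natr; under eq_bigr do rewrite sumr_const card_ord.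
    by rewrite sumr_const card_ord.
  by rewrite sqr_card sqr_n -sumrB; apply: eq_bigr => i _; rewrite sumrB.
have hG : (#|G|%:R : R) <= n%:R by rewrite ler_nat -[X in (_ <= X)%N]card_ord max_card.
have := ler0n R #|G|; nra.
Qed.

Lemma optimal_mass_bounds :
  let gap := n%:R - #|G|%:R in
  \sum_i \sum_(j | comm i != comm j) W i j <=
    4 * lam * n%:R ^+ 2 / (a - b) + 2 * n%:R * gap /\
  \sum_c (#|[set i | comm i == c]|%:R : R) ^+ 2 - 4 * n%:R * gap
    - 4 * lam * n%:R ^+ 2 / (a - b) <= \sum_i \sum_(j | comm i == comm j) W i j.
Proof.
move=> gap; have [[F [W01 _ _ _ _]] W_max] := optW.
have hab : 0 < a - b by rewrite subr_gt0.
have n_gt0R : (0 : R) < n%:R by rewrite ltr0n.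
set cross := \sum_i \sum_j
  (if (i \in G) && (j \in G) && (comm i != comm j) then W i j else 0).
set outside := \sum_i \sum_j (1 - (if (i \in G) && (j \in G) then 1 else 0) : R).
have h_cross : cross <= 4 * lam * n%:R ^+ 2 / (a - b).
  have -> : cross = n%:R / (a - b) * ((a - b) / n%:R * cross).
    by field; rewrite natn_neq0 subr_eq0 gt_eqF.
  apply: le_trans (_ : n%:R / (a - b) * (4 * lam * n%:R) <= _).
    by rewrite ler_wpM2l ?cross_good_mass_le // divr_ge0 // ltW.
  by rewrite le_eqVlt; apply/orP; left; apply/eqP; field; rewrite subr_eq0 gt_eqF.
have h_out := mass_outside_good; rewrite -/outside -/gap in h_out.
have h_off : \sum_i \sum_(j | comm i != comm j) W i j <= cross + outside.
  rewrite -big_split; apply: ler_sum => i _ /=.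
  rewrite big_mkcond -big_split; apply: ler_sum => j _ /=.
  by have := W01 i j; case: (i \in G); case: (j \in G); case: (comm i != comm j) => /=;
    move=> /andP[? ?]; lra.
have h_val := W_max _ _ planted_feasible.
have h_same : \sum_i \sum_j (if comm i == comm j then 1 else 0) <=
    sdp_value planted_W + outside.
  rewrite /sdp_value -big_split; apply: ler_sum => i _ /=.
  rewrite -big_split; apply: ler_sum => j _ /=; rewrite !mxE.
  by case: (i \in G); case: (j \in G); case: (comm i == comm j) => /=; lra.
have h_split : sdp_value W = \sum_i \sum_(j | comm i == comm j) W i j +
    \sum_i \sum_(j | comm i != comm j) W i j.
  by rewrite /sdp_value -big_split; apply: eq_bigr => i _ /=; exact: bigID.
rewrite sum_sqr_card_classes; split; lra.
Qed.

End PlantedSolution.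

Section Constants.
Variables (R : realType) (chi a b : R).
Let C := (Num.sqrt a - Num.sqrt b) ^+ 2.

Lemma sqrt_gap_gt0 : 0 <= b -> b < a -> 0 < Num.sqrt a - Num.sqrt b.
Proof. by move=> b_ge0 ba; rewrite subr_gt0 ltr_sqrt //; lra. Qed.

Lemma sqrt_C : 0 <= b -> b < a -> Num.sqrt C = Num.sqrt a - Num.sqrt b.
Proof. by move=> b_ge0 ba; rewrite sqrtr_sqr gtr0_norm // sqrt_gap_gt0. Qed.

Lemma C_gt0 : 0 <= b -> b < a -> 0 < C.
Proof. by move=> b_ge0 ba; rewrite exprn_gt0 // sqrt_gap_gt0. Qed.

(* [a - b = (sqrt a - sqrt b)(sqrt a + sqrt b)] and [sqrt (a + b) <= sqrt a + sqrt b]. *)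
Lemma chi_ratio_le : 0 <= b -> b < a -> 0 <= chi ->
  chi * Num.sqrt (a + b) / (a - b) <= chi / Num.sqrt C.
Proof.
move=> b_ge0 ba chi_ge0; rewrite sqrt_C //; have gap_gt0 := sqrt_gap_gt0 b_ge0 ba.
have sa := sqr_sqrtr (ltW (le_lt_trans b_ge0 ba)); have sb := sqr_sqrtr b_ge0.
have sa_ge0 := sqrtr_ge0 a; have sb_ge0 := sqrtr_ge0 b.
have sub_add : Num.sqrt (a + b) <= Num.sqrt a + Num.sqrt b.
  rewrite -[X in _ <= X]ger0_norm ?addr_ge0 // -sqrtr_sqr ler_sqrt ?sqr_ge0 //.
  by rewrite sqrrD sa sb; have := mulr_ge0 sa_ge0 sb_ge0; lra.
have -> : a - b = (Num.sqrt a - Num.sqrt b) * (Num.sqrt a + Num.sqrt b).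
  by rewrite -[in LHS]sa -[in LHS]sb; ring.
have sum_gt0 : 0 < Num.sqrt a + Num.sqrt b by lra.
rewrite -subr_ge0.
have -> : chi / (Num.sqrt a - Num.sqrt b) -
    chi * Num.sqrt (a + b) / ((Num.sqrt a - Num.sqrt b) * (Num.sqrt a + Num.sqrt b)) =
    chi * (Num.sqrt a + Num.sqrt b - Num.sqrt (a + b)) /
    ((Num.sqrt a - Num.sqrt b) * (Num.sqrt a + Num.sqrt b)).
  by field; rewrite !gt_eqF.
by rewrite divr_ge0 ?mulr_ge0 //; lra.
Qed.

(* From [e^(2C) >= 1 + 2C] and [(1 + 2C)^2 >= 8C]. *)
Lemma expR_le_chi_ratio : 0 <= b -> b < a -> 0 <= chi -> 1 / 2 <= chi ^+ 2 ->
  2 * expR (- (2 * C)) <= chi / Num.sqrt C.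
Proof.
move=> b_ge0 ba chi_ge0 chi_sqr; have C_pos := C_gt0 b_ge0 ba; set E := expR (2 * C).
have E_ge : 1 + 2 * C <= E by apply: expR_ge1Dx.
have E_gt0 : 0 < E by apply: expR_gt0.
have sC_gt0 : 0 < Num.sqrt C by rewrite sqrtr_gt0.
have sCC := sqr_sqrtr (ltW C_pos).
have key : 2 * Num.sqrt C <= chi * E.
  have : (2 * Num.sqrt C) ^+ 2 <= (chi * E) ^+ 2.
    rewrite !exprMn sCC.
    have : 8 * C <= E ^+ 2 by have := sqr_ge0 (1 - 2 * C); nra.
    nra.
  by have := mulr_ge0 chi_ge0 (ltW E_gt0); nra.
rewrite expRN -/E -subr_ge0.
have -> : chi / Num.sqrt C - 2 * E^-1 = (chi * E - 2 * Num.sqrt C) / (Num.sqrt C * E).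
  by field; rewrite !gt_eqF.
by apply: divr_ge0; [lra | apply: mulr_ge0; apply: ltW].
Qed.

Lemma final_constants (N g s t eps cross same Sig : R) :
  0 <= b -> b < a -> 0 <= chi -> 1 / 2 <= chi ^+ 2 -> 0 < N -> s - t <= g -> (1 - expR (- (2 * C))) * N <= s -> t <= eps * N ->
  cross <= 4 * (chi * Num.sqrt (a + b)) * N ^+ 2 / (a - b) + 2 * N * (N - g) ->
  Sig - 4 * N * (N - g) - 4 * (chi * Num.sqrt (a + b)) * N ^+ 2 / (a - b) <= same ->
  cross <= (5 * chi / Num.sqrt C + 2 * eps) * N ^+ 2 /\
  Sig - (6 * chi / Num.sqrt C + 4 * eps) * N ^+ 2 <= same.
Proof.
move=> b_ge0 ba chi_ge0 chi_sqr N_gt0 hg hs ht hcross hsame.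
have := expR_le_chi_ratio b_ge0 ba chi_ge0 chi_sqr.
have := chi_ratio_le b_ge0 ba chi_ge0.
set e := expR (- (2 * C)) in hs *; set q := chi / Num.sqrt C.
set L := chi * Num.sqrt (a + b) / (a - b) => hL he.
have eL : 4 * (chi * Num.sqrt (a + b)) * N ^+ 2 / (a - b) = 4 * L * N ^+ 2.
  by rewrite /L; field; rewrite subr_eq0 gt_eqF.
rewrite eL in hcross hsame; rewrite -!(mulrA _ chi) -/q.
have N2_ge0 : 0 <= N ^+ 2 by rewrite sqr_ge0.
have p1 : L * N ^+ 2 <= q * N ^+ 2 by rewrite ler_wpM2r.
have p2 : N * (N - g) <= N * ((e + eps) * N).
  by rewrite ler_wpM2l ?(ltW N_gt0) //; lra.
have p3 : (2 * e) * N ^+ 2 <= q * N ^+ 2 by rewrite ler_wpM2r.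
have p4 : N * ((e + eps) * N) = e * N ^+ 2 + eps * N ^+ 2 by ring.
by split; lra.
Qed.

End Constants.

Lemma adj_of_graph (R : realType) n (w : sample n) : is_graph (adj_of w : 'M[R]_n).
Proof.
split; [|split].
- by apply/matrixP => i j; rewrite !mxE; case: (ltngtP i j).
- by move=> i; rewrite mxE ltnn.
- move=> i j; rewrite mxE.
  case: (i < j)%N; first by case: (w (i, j)); [right|left].
  case: (j < i)%N; first by case: (w (j, i)); [right|left].
  by left.
Qed.

Section SBMProbability.
Variables (R : realType) (n k : nat) (comm : 'I_n -> 'I_k) (a b : R).

Lemma sbm_weight_ge0 w :
  0 <= b -> b < a -> a <= n%:R -> 0 <= sbm_weight comm a b w.
Proof.
move=> b_ge0 ba an; apply: prodr_ge0 => p _.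
have n_gt0 : (0 : R) < n%:R by apply: lt_le_trans an; apply: le_lt_trans ba.
have : 0 <= edge_prob comm a b p.1 p.2 <= 1.
  by rewrite /edge_prob; case: ifP => _; rewrite divr_ge0 ?ler0n //= ?ler_pdivrMr // ?mul1r;
    lra.
by case: ifP => _; case: (w p); lra.
Qed.

Lemma le_sbm_prob (E E' : sample n -> Prop) :
  0 <= b -> b < a -> a <= n%:R -> (forall w, E w -> E' w) ->
  sbm_prob comm a b E <= sbm_prob comm a b E'.
Proof.
move=> b_ge0 ba an EE'; rewrite /sbm_prob !(big_mkcond (fun w => `[< _ >])).
apply: ler_sum => w _; case: (boolP `[< E w >]) => [/asboolW/EE'/asboolT -> //|_].
by case: ifP => _; rewrite ?lexx ?sbm_weight_ge0.
Qed.

Lemma sbm_prob_gt0_exists (E : sample n -> Prop) :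
  0 < sbm_prob comm a b E -> exists w, E w.
Proof.
move=> hp; apply: contrapT => noE; move: hp.
by rewrite /sbm_prob big1 ?ltxx // => w /asboolW Ew; case: noE; exists w.
Qed.

End SBMProbability.

(* Instantiating the property with two vertices in one community, [a = 2] and
   [b = 0]: the restricted centred matrix has diagonal entry [-1], so
   [1 <= (chi sqrt 2)^2]. *)
Lemma chi_property_lb (R : realType) (chi : R) :
  chi_property chi -> 0 <= chi /\ 1 / 2 <= chi ^+ 2.
Proof.
move=> hchi.
have := hchi 2%N 1%N (fun _ => ord0) 2 0 isT (lexx 0) ltac:(by rewrite ltr0n) (lexx _).
set C := _ ^+ 2 => hprob.
have C_gt0 : 0 < C by rewrite /C sqrtr0 subr0 sqr_sqrtr ?ler0n.
have hprob_gt0 : (0 : R) < 1 - 2 / (2%:R ^+ 2).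
  by rewrite -natrX; lra.
have [w [S [hS [chi_ge0 hop]]]] := sbm_prob_gt0_exists (lt_le_trans hprob_gt0 hprob).
have [i iS] : exists i, i \in S.
  apply/set0Pn; rewrite -card_gt0 -(ltr_nat R); apply: lt_le_trans hS.
  by rewrite mulr_gt0 // subr_gt0 expR_lt1 oppr_lt0 mulr_gt0.
split; first by move: chi_ge0; rewrite pmulr_lge0 // sqrtr_gt0 addr0.
have := hop (delta_mx i 0).
have -> : \sum_j ((delta_mx i 0 : 'cV[R]_2) j 0) ^+ 2 = 1.
  rewrite (bigD1 i) //= big1 => [|j ji]; first by rewrite !mxE eqxx expr1n addr0.
  by rewrite mxE (negbTE ji) expr0n.
rewrite -colE mulr1 exprMn addr0 sqr_sqrtr ?ler0n //.
set M := restrict _ _ => hM.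
have Mii : M i i = -1 by rewrite !mxE iS /= ltnn; field.
have : (M i i) ^+ 2 <= \sum_j ((col i M) j 0) ^+ 2.
  rewrite (bigD1 i) //= [col i M i 0]mxE lerDl.
  by apply: sumr_ge0 => j _; exact: sqr_ge0.
by rewrite Mii; lra.
Qed.

Unset Implicit Arguments. Set Strict Implicit.

Theorem mainTheorem10 (R : realType) (chi : R) (n k : nat) (comm : 'I_n -> 'I_k)
    (a b eps : R) (adv : sample n -> 'M[R]_n) :
  chi_property chi ->
  (0 < n)%N -> 0 <= b -> b < a -> a <= n%:R ->
  (forall w : sample n, eps_corruption comm eps (adj_of w) (adv w)) ->
  let C := (Num.sqrt a - Num.sqrt b) ^+ 2 in
  1 - 2 / (n%:R ^+ 2) <=
  sbm_prob comm a b (fun w => forall W : 'M[R]_n, sdp_optimal (adv w) a b chi W ->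
    (\sum_i \sum_(j | comm i != comm j) W i j
       <= (5 * chi / Num.sqrt C + 2 * eps) * n%:R ^+ 2) /\
    (\sum_(c : 'I_k) (#|[set i | comm i == c]|%:R : R) ^+ 2
       - (6 * chi / Num.sqrt C + 4 * eps) * n%:R ^+ 2
       <= \sum_i \sum_(j | comm i == comm j) W i j)).
Proof.
move=> hchi n_gt0 b_ge0 ba an hadv /=.
have [chi_ge0 chi_sqr] := chi_property_lb hchi.
apply: le_trans (hchi n k comm a b n_gt0 b_ge0 ba an) _ => /=.
apply: le_sbm_prob => // w [S [hS hop]] W optW.
have [A1 [semirandomA1 [_ [T [hT A_A1]]]]] := hadv w.
have lam_gt0 : 0 < chi * Num.sqrt (a + b).
  rewrite mulr_gt0 ?sqrtr_gt0 //; last by lra.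
  by rewrite lt_neqAle chi_ge0 andbT; apply: contraTneq chi_sqr => <-; lra.
have [cross same] := optimal_mass_bounds n_gt0 ba lam_gt0 (adj_of_graph R w)
  semirandomA1 A_A1 hop optW.
have good_ge : (#|S|%:R : R) - #|T|%:R <= #|S :\: T|%:R.
  rewrite lerBlDr -natrD ler_nat -(cardsID T S) addnC leq_add2l.
  by apply: subset_leq_card; apply: subsetIr.
have n_gt0R : (0 : R) < n%:R by rewrite ltr0n.
exact: final_constants b_ge0 ba chi_ge0 chi_sqr n_gt0R good_ge hS hT cross same.
Qed.
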